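(* Let $A$ be a real $2\times 2$ matrix and $B$ a real $1\times 2$ matrix, and let $\mathrm{NT}=\{\vec{x}\in\mathbb{R}^2 : BA^k\vec{x}>0 \text{ for all integers } k\ge 0\}$. Suppose $A$ has a positive eigenvalue $\lambda_1$ and a negative eigenvalue $\lambda_2$ with $\lambda_1<|\lambda_2|$, and eigenvectors $\vec{\beta}_1,\vec{\beta}_2$ for $\lambda_1,\lambda_2$ respectively, with $B\vec{\beta}_1>0$ and $B\vec{\beta}_2>0$. Then $\mathrm{NT}=\{k\vec{\beta}_1: k>0\}$.
   Context: $\mathrm{NT}$ is the non-termination set of the loop ''while $(B\vec{x}>0)$ $\{\vec{x}:=A\vec{x}\}$''. *)

From Stdlib Require Import Reals.
Open Scope R_scope.

Definition vec2 : Type := (R * R)%type.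

Record mat2 : Type := Mat2 { m11 : R; m12 : R; m21 : R; m22 : R }.

Record row2 : Type := Row2 { b1 : R; b2 : R }.

Definition mat2_mul (M N : mat2) : mat2 :=
  Mat2 (m11 M * m11 N + m12 M * m21 N) (m11 M * m12 N + m12 M * m22 N)
       (m21 M * m11 N + m22 M * m21 N) (m21 M * m12 N + m22 M * m22 N).

Definition mat2_id : mat2 := Mat2 1 0 0 1.

Fixpoint mat2_pow (M : mat2) (k : nat) : mat2 :=
  match k with O => mat2_id | S k' => mat2_mul M (mat2_pow M k') end.

Definition mat2_app (M : mat2) (x : vec2) : vec2 :=
  (m11 M * fst x + m12 M * snd x, m21 M * fst x + m22 M * snd x).

(* B x  (a 1x1 matrix, identified with a real) *)
Definition row2_app (B : row2) (x : vec2) : R := b1 B * fst x + b2 B * snd x.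

Definition vscale (c : R) (x : vec2) : vec2 := (c * fst x, c * snd x).

Definition eigenvector (M : mat2) (l : R) (v : vec2) : Prop :=
  v <> (0, 0) /\ mat2_app M v = vscale l v.

(* Non-termination set of "while (B x > 0) { x := A x }":
   NT = { x in R^2 | B A^k x > 0 for all k >= 0 } *)
Definition NT (A : mat2) (B : row2) (x : vec2) : Prop :=
  forall k : nat, row2_app B (mat2_app (mat2_pow A k) x) > 0.

From Stdlib Require Import Reals Lra Psatz.
Open Scope R_scope.

(* Eigenvectors of A for the distinct eigenvalues l1 and l2 are
   linearly independent, so every x is a combination a*beta1 + b*beta2, and
   B A^k x = a l1^k (B beta1) + b l2^k (B beta2).  Writing l2 = -m with
   m > l1 > 0, this equals m^k (a s (l1/m)^k + (-1)^k b t): the first term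
   tends to 0 while the second alternates in sign with constant modulus, so
   the orbit leaves {B x > 0} unless b = 0.  When b = 0, the case k = 0
   forces a > 0; conversely, positive multiples of beta1 stay in the guard
   forever since l1 > 0.
   The file first establishes linearity facts for the 2x2 matrix model,
   then linear independence of eigenvectors and the coordinate formula,
   then the analytic sign-change lemma, and finally the theorem. *)

Definition vcomb (a : R) (v : vec2) (b : R) (w : vec2) : vec2 :=
  (a * fst v + b * fst w, a * snd v + b * snd w).

Definition det2 (v w : vec2) : R := fst v * snd w - snd v * fst w.

Lemma mat2_app_mul (M N : mat2) (v : vec2) :
  mat2_app (mat2_mul M N) v = mat2_app M (mat2_app N v).
Proof. destruct M, N, v; unfold mat2_app, mat2_mul; simpl; f_equal; ring. Qed.

Lemma mat2_app_id (v : vec2) : mat2_app mat2_id v = v.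
Proof. destruct v; unfold mat2_app, mat2_id; simpl; f_equal; ring. Qed.

Lemma mat2_app_vscale (M : mat2) (c : R) (v : vec2) :
  mat2_app M (vscale c v) = vscale c (mat2_app M v).
Proof. destruct v; unfold mat2_app, vscale; simpl; f_equal; ring. Qed.

Lemma mat2_app_vcomb (M : mat2) (a b : R) (v w : vec2) :
  mat2_app M (vcomb a v b w) = vcomb a (mat2_app M v) b (mat2_app M w).
Proof. destruct v, w; unfold mat2_app, vcomb; simpl; f_equal; ring. Qed.

Lemma row2_app_vscale (B : row2) (c : R) (v : vec2) :
  row2_app B (vscale c v) = c * row2_app B v.
Proof. destruct v; unfold row2_app, vscale; simpl; ring. Qed.

Lemma row2_app_vcomb (B : row2) (a b : R) (v w : vec2) :
  row2_app B (vcomb a v b w) = a * row2_app B v + b * row2_app B w.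
Proof. destruct v, w; unfold row2_app, vcomb; simpl; ring. Qed.

Lemma vscale_as_vcomb (c : R) (v w : vec2) : vscale c v = vcomb c v 0 w.
Proof. destruct v, w; unfold vscale, vcomb; simpl; f_equal; ring. Qed.

Lemma mat2_pow_eigen (A : mat2) (l : R) (v : vec2) :
  mat2_app A v = vscale l v ->
  forall k : nat, mat2_app (mat2_pow A k) v = vscale (l ^ k) v.
Proof.
  intros Hv k; induction k as [|k IH]; simpl.
  - rewrite mat2_app_id; destruct v; unfold vscale; simpl; f_equal; ring.
  - rewrite mat2_app_mul, IH, mat2_app_vscale, Hv.
    destruct v; unfold vscale; simpl; f_equal; ring.
Qed.

Lemma parallel_of_det2_eq0 (v w : vec2) :
  v <> (0, 0) -> det2 v w = 0 -> exists c : R, w = vscale c v.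
Proof.
  destruct v as [v1 v2], w as [w1 w2]; unfold det2, vscale; simpl.
  intros Hv Hd.
  destruct (Req_dec v1 0) as [Hv1 | Hv1].
  - assert (Hv2 : v2 <> 0) by (intro; apply Hv; subst; reflexivity).
    exists (w2 / v2); f_equal; [|field; exact Hv2].
    subst v1; apply (Rmult_eq_reg_l v2); [|exact Hv2].
    field_simplify; [lra | exact Hv2].
  - exists (w1 / v1); f_equal; [field; exact Hv1|].
    apply (Rmult_eq_reg_l v1); [|exact Hv1].
    field_simplify; [lra | exact Hv1].
Qed.

Lemma eigenvectors_independent (A : mat2) (l m : R) (v w : vec2) :
  l <> m -> eigenvector A l v -> eigenvector A m w -> det2 v w <> 0.
Proof.
  intros Hlm [Hv Ev] [Hw Ew] Hd.
  destruct (parallel_of_det2_eq0 v w Hv Hd) as [c ->].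
  apply Hw.
  (* A (c v) equals both c l v and m c v, so (l - m) c v = 0. *)
  rewrite mat2_app_vscale, Ev in Ew.
  destruct v as [v1 v2]; unfold vscale in *; simpl in *.
  injection Ew as E1 E2.
  assert (Hlm' : l - m <> 0) by lra.
  f_equal; apply (Rmult_eq_reg_l (l - m)); try exact Hlm'; nra.
Qed.

(* Cramer's rule: coordinates of x in a basis (v, w). *)
Lemma vcomb_cramer (v w x : vec2) :
  det2 v w <> 0 ->
  x = vcomb (det2 x w / det2 v w) v (det2 v x / det2 v w) w.
Proof.
  destruct v, w, x; unfold det2, vcomb; simpl; intro Hd.
  f_equal; field; exact Hd.
Qed.

Lemma guard_along_orbit (A : mat2) (B : row2) (l m a b : R) (v w : vec2) :
  mat2_app A v = vscale l v -> mat2_app A w = vscale m w ->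
  forall k : nat,
  row2_app B (mat2_app (mat2_pow A k) (vcomb a v b w))
  = a * l ^ k * row2_app B v + b * m ^ k * row2_app B w.
Proof.
  intros Ev Ew k.
  rewrite mat2_app_vcomb, (mat2_pow_eigen A l v Ev), (mat2_pow_eigen A m w Ew),
    row2_app_vcomb, !row2_app_vscale.
  ring.
Qed.

Lemma geometric_tail_small (c r e : R) :
  Rabs r < 1 -> 0 < e ->
  exists N : nat, forall n : nat, (n >= N)%nat -> c * r ^ n < e.
Proof.
  intros Hr He.
  assert (Hy : 0 < e / (Rabs c + 1)).
  { apply Rdiv_lt_0_compat; [exact He | pose proof (Rabs_pos c); lra]. }
  destruct (pow_lt_1_zero r Hr _ Hy) as [N HN].
  exists N; intros n Hn.
  specialize (HN n Hn).
  pose proof (Rabs_pos c) as Hc.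
  assert (Hbound : Rabs c * Rabs (r ^ n) <= Rabs c * (e / (Rabs c + 1))).
  { apply Rmult_le_compat_l; lra. }
  assert (Hlt : Rabs c * (e / (Rabs c + 1)) < e).
  { apply (Rmult_lt_reg_r (Rabs c + 1)); [lra|].
    field_simplify; lra. }
  pose proof (Rle_abs (c * r ^ n)) as Habs.
  rewrite Rabs_mult in Habs.
  lra.
Qed.

Lemma alternating_sign_negative (d : R) (N : nat) :
  d <> 0 -> exists n : nat, (n >= N)%nat /\ d * (-1) ^ n = - Rabs d.
Proof.
  intro Hd.
  assert (Hsq : forall n, (-1) ^ n = 1 \/ (-1) ^ n = -1).
  { induction n as [|n [IH | IH]]; simpl; [left | right | left]; lra. }
  destruct (Hsq N) as [HN | HN], (Rle_dec 0 d) as [Hd0 | Hd0].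
  - exists (S N); split; [lia|]; simpl; rewrite HN, Rabs_pos_eq by lra; ring.
  - exists N; split; [lia|]; rewrite HN, Rabs_left by lra; ring.
  - exists N; split; [lia|]; rewrite HN, Rabs_pos_eq by lra; ring.
  - exists (S N); split; [lia|]; simpl; rewrite HN, Rabs_left by lra; ring.
Qed.

(* If l2 < 0 strictly dominates l1 in modulus and d <> 0, the sequence
   c l1^n + d l2^n takes a negative value: after factoring out (-l2)^n the
   l1-part decays while the l2-part alternates with modulus |d|. *)
Lemma dominant_negative_term_changes_sign (l1 l2 c d : R) :
  Rabs l1 < - l2 -> d <> 0 -> exists n : nat, c * l1 ^ n + d * l2 ^ n < 0.
Proof.
  intros Hl Hd.
  set (m := - l2); set (r := l1 / m).
  assert (Hm : 0 < m) by (pose proof (Rabs_pos l1); unfold m; lra).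
  assert (Hr : Rabs r < 1).
  { unfold r, Rdiv; rewrite Rabs_mult, Rabs_inv, (Rabs_pos_eq m) by lra.
    apply (Rmult_lt_reg_r m); [exact Hm|].
    replace (Rabs l1 * / m * m) with (Rabs l1) by (field; lra).
    unfold m; lra. }
  destruct (geometric_tail_small c r (Rabs d) Hr (Rabs_pos_lt d Hd)) as [N HN].
  destruct (alternating_sign_negative d N Hd) as [n [Hn Hsign]].
  exists n.
  assert (Hfactor : c * l1 ^ n + d * l2 ^ n = m ^ n * (c * r ^ n + d * (-1) ^ n)).
  { replace l1 with (r * m) by (unfold r; field; lra).
    replace l2 with (-1 * m) by (unfold m; ring).
    rewrite !Rpow_mult_distr; ring. }
  rewrite Hfactor, Hsign.
  pose proof (pow_lt m n Hm).
  specialize (HN n Hn).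
  nra.
Qed.

Theorem lemma10 (A : mat2) (B : row2) (l1 l2 : R) (beta1 beta2 : vec2) :
  0 < l1 -> l2 < 0 -> l1 < Rabs l2 ->
  eigenvector A l1 beta1 -> eigenvector A l2 beta2 ->
  row2_app B beta1 > 0 -> row2_app B beta2 > 0 ->
  forall x : vec2, NT A B x <-> exists k : R, k > 0 /\ x = vscale k beta1.
Proof.
  intros Hl1 Hl2 Hdom Eig1 Eig2 Hs Ht x.
  rewrite Rabs_left in Hdom by exact Hl2.
  pose proof (proj2 Eig1) as Ev1; pose proof (proj2 Eig2) as Ev2.
  pose proof (eigenvectors_independent A l1 l2 beta1 beta2
                ltac:(lra) Eig1 Eig2) as Hdet.
  split.
  - intro HNT.
    rewrite (vcomb_cramer beta1 beta2 x Hdet) in HNT |- *.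
    set (a := det2 x beta2 / det2 beta1 beta2) in *.
    set (b := det2 beta1 x / det2 beta1 beta2) in *.
    unfold NT in HNT; setoid_rewrite (guard_along_orbit A B l1 l2 a b _ _ Ev1 Ev2) in HNT.
    (* The beta2-coordinate must vanish, otherwise the guard fails eventually. *)
    assert (Hb : b = 0).
    { destruct (Req_dec b 0) as [|Hb]; [assumption|].
      destruct (dominant_negative_term_changes_sign l1 l2 (a * row2_app B beta1)
                  (b * row2_app B beta2) ltac:(rewrite Rabs_pos_eq; lra)
                  ltac:(apply Rmult_integral_contrapositive; split; lra)) as [n Hn].
      specialize (HNT n); lra. }
    specialize (HNT 0%nat); rewrite Hb in HNT; simpl in HNT.
    exists a; split; [nra|].
    rewrite Hb, <- vscale_as_vcomb; reflexivity.
  - intros [k [Hk ->]] n.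
    rewrite (vscale_as_vcomb k beta1 beta2), (guard_along_orbit A B l1 l2 k 0 _ _ Ev1 Ev2).
    pose proof (pow_lt l1 n Hl1).
    assert (0 < k * l1 ^ n) by (apply Rmult_lt_0_compat; lra).
    nra.
Qed.
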